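(* Let $p$ be a prime and let $r,s$ be integers with $1\leq r\leq s$. Suppose that $s\not\equiv 0,\pm1,\pm2,\dots,\pm(r-2)\pmod p$. Then $\lambda(r,s,p)$ is the standard partition, i.e. its $i$th part is $\lambda_i=r+s+1-2i$ for $1\leq i\leq r$.
   Context: For a positive integer $n$, let $J_n$ denote the $n\times n$ matrix with $1$s in positions $(i,i)$ for $1\le i\le n$ and $(i,i+1)$ for $1\le i<n$, and $0$s elsewhere (a unipotent Jordan block). For $1\le r\le s$ and a field $F$ of characteristic $p$, the Jordan canonical form of the $rs\times rs$ matrix $J_r\otimes J_s$ over $F$ is $J_{\lambda_1}\oplus\cdots\oplus J_{\lambda_r}$ with $\lambda_1\ge\cdots\ge\lambda_r>0$ and $\sum_i\lambda_i=rs$; this partition $\lambda(r,s,p)=(\lambda_1,\dots,\lambda_r)$ of $rs$ depends only on $r,s,p$. The standard partition of $rs$ is $(s+r-1,s+r-3,\dots,s-r+1)$. *)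

From mathcomp Require Import all_boot all_order all_algebra.
From mathcomp Require Export mxtens.
From mathcomp Require Import zify.
Set Implicit Arguments. Unset Strict Implicit. Unset Printing Implicit Defensive.
Import GRing.Theory Num.Theory.

Definition Jblock (F : fieldType) (n : nat) : 'M[F]_n :=
  (\matrix_(i < n, j < n) ((j == i :> nat) || (j == i.+1 :> nat))%:R)%R.

(* Parts of the standard partition (s+r-1, s+r-3, ..., s-r+1), 0-indexed:
   the part with 0-based index i < r is r + s - 1 - 2 i, i.e. r + s + 1 - 2 i'
   with the 1-based index i' = i + 1. *)
Definition std_part (r s : nat) (i : 'I_r) : nat := (r + s).-1 - i.*2.

Lemma std_sum_aux (a r : nat) : ((r.-1).*2 <= a ->
  \sum_(0 <= i < r) (a - i.*2) + r * r.-1 = r * a)%N.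
Proof.
elim: r => [|r IH] h; first by rewrite big_geq.
rewrite big_nat_recr //=.
case: r IH h => [|r] IH h; first by rewrite big_geq //=; lia.
have := IH ltac:(simpl in *; lia); simpl in *. lia.
Qed.

Lemma std_part_sum (r s : nat) : (r <= s)%N -> (\sum_(i < r) std_part s i = r * s)%N.
Proof.
move=> hrs; rewrite /std_part.
have := @std_sum_aux (r + s).-1 r ltac:(lia).
rewrite -(big_mkord xpredT (fun i => (r + s).-1 - i.*2)).
case: r hrs => [|r] hrs /=; first by rewrite big_geq.
lia.
Qed.

Definition std_jordan (F : fieldType) (r s : nat) (hrs : (r <= s)%N) : 'M[F]_(r * s) :=
  castmx (std_part_sum hrs, std_part_sum hrs)
         (\mxdiag_(i < r) Jblock F (std_part s i)).

From HB Require Import structures.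
From mathcomp Require Import all_boot all_order all_algebra.
From mathcomp Require Import zify ring.
Import GRing.Theory Num.Theory.
Set Implicit Arguments. Unset Strict Implicit. Unset Printing Implicit Defensive.
Local Open Scope ring_scope.

(* Read a row vector of length r * s, indexed through mxtens_index, as an
   element of F[x,y]/(x^r, y^s), the entry at (a, b) being the coefficient of
   x^a y^b. Right multiplication by J_r *t J_s is then multiplication by
   (1 + x)(1 + y), and the automorphism x |-> x (1 + y) conjugates
   multiplication by N = x + y to multiplication by (1 + x)(1 + y) - 1. So it
   suffices to find Jordan chains of N of lengths r + s - 1 - 2i, i < r.
   The map D u = (s - y d/dy)(x u) - (r - x d/dx)(y u) from bidegree (r, s)
   to (r + 1, s + 1) commutes with N, and the i-th chain is generated by
   D^i 1. They are independent by induction on r: the coefficient of x^r y^s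
   vanishes on the image of D but is C(r + s, r) on N^(r + s) 1, and D is
   injective as soon as 1, ..., r are nonzero in F. These two non-vanishing
   conditions are where the hypothesis on s mod p is used. *)

Section IterLinear.
Variables (R : pzRingType) (U : lmodType R) (f : {linear U -> U}).

Lemma iter_is_linear k : linear (iter k f).
Proof. by elim: k => [|k IH] a u v //=; rewrite IH linearP. Qed.
HB.instance Definition _ k :=
  GRing.isLinear.Build R U U *:%R (iter k f) (iter_is_linear k).

End IterLinear.

Lemma sum_nat_delta (M : nmodType) n k (g : nat -> M) :
  \sum_(0 <= j < n) (if j == k then g j else 0) = if (k < n)%N then g k else 0.
Proof. by rewrite -big_mkcond big_nat1_eq. Qed.

Section TruncatedPolynomials.
Variable F : fieldType.
Local Notation V r s := 'rV[F]_(r * s).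

(* Out-of-range indices read as 0. *)
Definition coef r s (a b : nat) (u : V r s) : F :=
  match (insub a : option 'I_r), (insub b : option 'I_s) with
  | Some i, Some j => u 0 (mxtens_index (i, j))
  | _, _ => 0
  end.

Fact coef_is_linear r s a b : scalar (@coef r s a b).
Proof.
rewrite /coef => c u v.
by case: (insub a : option 'I_r) => [i|]; case: (insub b : option 'I_s) => [j|];
  rewrite ?mxE ?mulr0 ?addr0.
Qed.
HB.instance Definition _ r s a b :=
  GRing.isLinear.Build F (V r s) F *%R (@coef r s a b) (@coef_is_linear r s a b).

Lemma coef_ord r s (i : 'I_r) (j : 'I_s) (u : V r s) :
  coef i j u = u 0 (mxtens_index (i, j)).
Proof. by rewrite /coef !valK. Qed.

Lemma coef_out r s a b (u : V r s) : ~~ ((a < r) && (b < s))%N -> coef a b u = 0.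
Proof.
rewrite /coef; case: insubP => [i _ <-|//]; case: insubP => [j _ <-|//].
by rewrite !ltn_ord.
Qed.

Lemma coef_ext r s (u v : V r s) :
  (forall a b, (a < r)%N -> (b < s)%N -> coef a b u = coef a b v) -> u = v.
Proof.
move=> euv; apply/rowP => k; rewrite -(mxtens_unindexK k).
by case: (mxtens_unindex k) => i j; rewrite -!coef_ord euv.
Qed.

Definition poly_row r s (f : nat -> nat -> F) : V r s :=
  \row_k f (mxtens_unindex k).1 (mxtens_unindex k).2.

Lemma coef_poly_row r s f a b :
  (a < r)%N -> (b < s)%N -> coef a b (poly_row r s f) = f a b.
Proof.
move=> ha hb; rewrite -[a]/(val (Ordinal ha)) -[b]/(val (Ordinal hb)).
by rewrite coef_ord mxE mxtens_indexK.
Qed.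

(* Coefficients of x^a y^b in x u and in y u, before truncation. *)
Definition coef_xu r s a b (u : V r s) := if a is a'.+1 then coef a' b u else 0.
Definition coef_yu r s a b (u : V r s) := if b is b'.+1 then coef a b' u else 0.

Definition one_row r s := poly_row r s (fun a b => ((a == 0) && (b == 0))%:R).

Definition mulXpY r s (u : V r s) :=
  poly_row r s (fun a b => coef_xu a b u + coef_yu a b u).

(* D u = (s - y d/dy)(x u) - (r - x d/dx)(y u) *)
Definition raise r s (u : V r s) : V r.+1 s.+1 :=
  poly_row r.+1 s.+1
    (fun a b => (s - b)%:R * coef_xu a b u - (r - a)%:R * coef_yu a b u).

(* The algebra automorphism x |-> x (1 + y), y |-> y. *)
Definition twist r s (u : V r s) :=
  poly_row r s (fun a b => \sum_(0 <= j < b.+1) 'C(a, b - j)%:R * coef a j u).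

Ltac linear_by_coef :=
  move=> c u v; apply: coef_ext => -[|a] [|b] ha hb;
  rewrite linearP /= !coef_poly_row // /coef_xu /coef_yu ?linearP /=; ring.

Fact mulXpY_is_linear r s : linear (@mulXpY r s).
Proof. linear_by_coef. Qed.
HB.instance Definition _ r s :=
  GRing.isLinear.Build F (V r s) (V r s) *:%R (@mulXpY r s) (@mulXpY_is_linear r s).

Fact raise_is_linear r s : linear (@raise r s).
Proof. linear_by_coef. Qed.
HB.instance Definition _ r s :=
  GRing.isLinear.Build F (V r s) (V r.+1 s.+1) *:%R (@raise r s) (@raise_is_linear r s).

Fact twist_is_linear r s : linear (@twist r s).
Proof.
move=> c u v; apply: coef_ext => a b ha hb; rewrite linearP /= !coef_poly_row //.
rewrite mulr_sumr -big_split /=; apply: eq_bigr => j _; rewrite linearP /=; ring.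
Qed.
HB.instance Definition _ r s :=
  GRing.isLinear.Build F (V r s) (V r s) *:%R (@twist r s) (@twist_is_linear r s).

Lemma raise_mulXpY r s (u : V r s) : raise (mulXpY u) = mulXpY (raise u).
Proof.
(* On the boundary b = s (resp. a = r) the weight vanishes, which makes up for
   the truncation of mulXpY. *)
have cX a b : (a < r)%N -> (b <= s)%N ->
    (s - b)%:R * coef a b (mulXpY u) = (s - b)%:R * (coef_xu a b u + coef_yu a b u).
  move=> ha; rewrite leq_eqVlt => /predU1P[->|hb]; first by rewrite subnn !mul0r.
  by rewrite coef_poly_row.
have cY a b : (a <= r)%N -> (b < s)%N ->
    (r - a)%:R * coef a b (mulXpY u) = (r - a)%:R * (coef_xu a b u + coef_yu a b u).
  rewrite leq_eqVlt => /predU1P[->|ha] hb; first by rewrite subnn !mul0r.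
  by rewrite coef_poly_row.
apply: coef_ext => a b ha hb; rewrite !coef_poly_row // /coef_xu /coef_yu.
case: a ha => [|[|a]] ha; case: b hb => [|[|b]] hb /=;
  rewrite ?cX ?cY ?coef_poly_row ?natrB /coef_xu /coef_yu /=; try lia; ring.
Qed.

Lemma iter_raise r s k (u : V r s) :
  iter k (@mulXpY r.+1 s.+1) (raise u) = raise (iter k (@mulXpY r s) u).
Proof. by elim: k => //= k ->; rewrite raise_mulXpY. Qed.

Lemma coef_top_raise r s (u : V r s) : coef r s (raise u) = 0.
Proof. by rewrite coef_poly_row // !subnn !mul0r subrr. Qed.

Lemma raise_inj r s (u : V r s) :
  (forall k, (0 < k <= r)%N -> k%:R != 0 :> F) -> raise u = 0 -> u = 0.
Proof.
move=> nz_r u0.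
have step a b : (a < r)%N -> (b < s)%N -> coef_xu a b.+1 u = 0 -> coef a b u = 0.
  move=> ha hb hx; have /eqP := congr1 (coef a b.+1) u0.
  rewrite linear0 coef_poly_row ?ltnS ?(ltnW ha) // hx mulr0 sub0r oppr_eq0 mulf_eq0.
  by rewrite (negbTE (nz_r _ _)) => [/eqP|]; last lia.
apply: coef_ext => a b ha hb; rewrite linear0.
elim: a b ha hb => [|a IHa] b ha hb; apply: step => //=.
have [hb1|hb1] := ltnP b.+1 s; first by apply: IHa => //; apply: ltnW.
by apply: coef_out; rewrite negb_and -!leqNgt hb1 orbT.
Qed.

Lemma coef_iter_mulXpY_one r s m a b : (a < r)%N -> (b < s)%N ->
  coef a b (iter m (@mulXpY r s) (one_row r s)) =
    if (a + b == m)%N then 'C(m, a)%:R else 0.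
Proof.
elim: m a b => [|m IHm] a b ha hb; rewrite /= coef_poly_row //.
  by case: a ha => [|a] ha; case: b hb => [|b] hb.
rewrite /coef_xu /coef_yu.
case: a ha => [|a] ha; case: b hb => [|b] hb.
- by rewrite addr0.
- rewrite add0r IHm ?add0n ?eqSS ?bin0 //; lia.
- rewrite addr0 IHm ?addn0 ?eqSS ?binS //; last lia.
  by case: eqP => [->|//]; rewrite (bin_small (ltnSn m)) add0n.
- rewrite !IHm ?addnS ?addSn ?eqSS ?binS; try lia.
  by case: eqP; rewrite ?addr0 // natrD addrC.
Qed.

Definition chain_len r s i := ((r + s).-1 - i.*2)%N.

Fixpoint chain_head (i r s : nat) : V r s :=
  match i with
  | 0 => one_row r s
  | i'.+1 =>
    match r, s return V r s with
    | r'.+1, s'.+1 => raise (chain_head i' r' s')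
    | _, _ => 0
    end
  end.

Lemma chain_head_nilpotent i r s :
  iter (chain_len r s i) (@mulXpY r s) (chain_head i r s) = 0.
Proof.
elim: i r s => [|i IHi] r s.
  apply: coef_ext => a b ha hb; rewrite linear0 coef_iter_mulXpY_one //.
  by case: eqP => //; rewrite /chain_len; lia.
case: r => [|r]; case: s => [|s] /=; rewrite ?linear0 //.
have -> : chain_len r.+1 s.+1 i.+1 = chain_len r s i by rewrite /chain_len; lia.
by rewrite iter_raise IHi linear0.
Qed.

Definition admissible r s :=
  forall m, (m.+2 <= r)%N -> (s + m)%:R != 0 :> F /\ (s - m)%:R != 0 :> F.

Lemma admissible_pred r s : admissible r.+1 s.+1 -> admissible r s.
Proof.
move=> adm [|m] hm; last first.
  have [+ _] := adm m (ltnW (ltnW hm)); have [_] := adm m.+2 hm.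
  by rewrite addnS addSn subSS.
have [_] := adm 1%N hm; rewrite subn1 addn0 => nz_s.
by split; rewrite ?addn0 ?subn0.
Qed.

Lemma admissible_natr r s k :
  admissible r.+1 s.+1 -> (0 < k <= r)%N -> k%:R != 0 :> F.
Proof.
move=> adm /andP[k_gt0 k_le_r]; apply/negP => /eqP k0.
have [_ /negP] := adm _ (leq_trans (ltn_pmod s.+1 k_gt0) k_le_r); apply.
by rewrite {1}(divn_eq s.+1 k) addnK natrM k0 mulr0.
Qed.

Lemma admissible_binom r s : admissible r.+1 s.+1 -> 'C(r + s, r)%:R != 0 :> F.
Proof.
move=> adm.
have ffact_neq0 m : (m <= r)%N -> ((s + m) ^_ m)%:R != 0 :> F.
  elim: m => [|m IHm] hm; first by rewrite ffactn0 oner_neq0.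
  have [nz_sm _] := adm m hm.
  by rewrite addnS ffactSS natrM mulf_neq0 ?IHm 1?ltnW // -addSn.
apply: contraNneq (ffact_neq0 r (leqnn r)) => C0.
by rewrite addnC -bin_ffact natrM C0 mul0r.
Qed.

Lemma first_chain_coef_eq0 r s (c : nat -> F) (w : V r s) j0 :
  'C(r + s, r)%:R != 0 :> F -> (j0 <= r + s)%N ->
  \sum_(0 <= j < (r + s).+1)
     c j *: iter j (@mulXpY r.+1 s.+1) (one_row r.+1 s.+1) + raise w = 0 ->
  c j0 = 0.
Proof.
move=> nz_binom le_j0 /(congr1 (coef r s \o iter (r + s - j0) (@mulXpY r.+1 s.+1))) /=.
rewrite !linearD /= iter_raise coef_top_raise addr0 !linear0 !linear_sum /=.
rewrite (eq_big_nat _ _ (F2 := fun j => if j == j0 then c j0 * 'C(r + s, r)%:R else 0)).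
  rewrite -big_mkcond big_nat1_eq ltnS le_j0 => /eqP.
  by rewrite mulf_eq0 (negbTE nz_binom) orbF => /eqP.
move=> j _; rewrite !linearZ /= -iterD coef_iter_mulXpY_one //.
have -> : (r + s == r + s - j0 + j)%N = (j == j0) by apply/eqP/eqP; lia.
by case: eqP => [->|_]; rewrite ?subnK ?mulr0.
Qed.

Lemma chains_free r s : (r <= s)%N -> admissible r s ->
  forall c : nat -> nat -> F,
  \sum_(0 <= i < r) \sum_(0 <= j < chain_len r s i)
     c i j *: iter j (@mulXpY r s) (chain_head i r s) = 0 ->
  forall i j, (i < r)%N -> (j < chain_len r s i)%N -> c i j = 0.
Proof.
elim: r s => [|r IHr] [|s] le_rs adm c sum0 i j hi //.
have chain_lenS i' : chain_len r.+1 s.+1 i'.+1 = chain_len r s i'.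
  by rewrite /chain_len; lia.
have chain_len0 : chain_len r.+1 s.+1 0 = (r + s).+1 by rewrite /chain_len; lia.
rewrite big_nat_recl //= chain_len0 in sum0.
have raise_tail : \sum_(0 <= i' < r) \sum_(0 <= j' < chain_len r.+1 s.+1 i'.+1)
      c i'.+1 j' *: iter j' (@mulXpY r.+1 s.+1) (chain_head i'.+1 r.+1 s.+1) =
    raise (\sum_(0 <= i' < r) \sum_(0 <= j' < chain_len r s i')
      c i'.+1 j' *: iter j' (@mulXpY r s) (chain_head i' r s)).
  rewrite linear_sum; apply: eq_bigr => i' _; rewrite chain_lenS linear_sum.
  by apply: eq_bigr => j' _; rewrite linearZ /= iter_raise.
rewrite raise_tail in sum0.
have c0 j' : (j' < (r + s).+1)%N -> c 0 j' = 0.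
  by move=> hj'; apply: first_chain_coef_eq0 sum0; rewrite ?admissible_binom.
move: sum0; rewrite big_nat_cond big1 ?add0r => [sum0|j' /andP[/andP[_ /c0->] _]];
  last by rewrite scale0r.
case: i hi => [|i] hi hj; first by apply: c0; rewrite -chain_len0.
apply: (IHr s le_rs (admissible_pred adm) (fun i j => c i.+1 j)) => //; last first.
  by rewrite -chain_lenS.
apply: raise_inj sum0 => k; exact: admissible_natr adm.
Qed.

Lemma sum_Jblock_col n b (hb : (b < n)%N) (g : nat -> F) :
  \sum_(j < n) Jblock F n j (Ordinal hb) * g j =
    g b + (if b is b'.+1 then g b' else 0).
Proof.
under eq_bigr => j _ do rewrite mxE.
rewrite -(big_mkord xpredT (fun j => ((b == j) || (b == j.+1))%:R * g j)) /=.
rewrite (eq_big_nat _ _ (F2 := fun j =>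
  (if j == b then g j else 0) + (if j.+1 == b then g j else 0))) => [|j _].
  rewrite big_split /= sum_nat_delta hb; congr (_ + _).
  case: b hb => [|b] hb; first by rewrite big1.
  by under eq_bigr do rewrite eqSS; rewrite sum_nat_delta ltnW.
rewrite ![b == _]eq_sym; case: eqP => [->|_]; case: eqP => [|_];
  rewrite ?mul1r ?mul0r ?addr0 ?add0r //; lia.
Qed.

Lemma sum_mxtens_index r s (G : 'I_(r * s) -> F) :
  \sum_k G k = \sum_(i < r) \sum_(j < s) G (mxtens_index (i, j)).
Proof.
rewrite pair_big /= (reindex (@mxtens_index r s)) /=; last first.
  by exists (@mxtens_unindex r s) => k _; rewrite (mxtens_indexK, mxtens_unindexK).
by apply: eq_bigr => -[i j].
Qed.

Lemma coef_mul_Jtens r s (u : V r s) a b : (a < r)%N -> (b < s)%N ->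
  coef a b (u *m (Jblock F r *t Jblock F s)) =
    coef a b u + coef_yu a b u +
    (if a is a'.+1 then coef a' b u + coef_yu a' b u else 0).
Proof.
move=> ha hb; rewrite -[a]/(val (Ordinal ha)) -[b]/(val (Ordinal hb)).
rewrite coef_ord mxE sum_mxtens_index.
under eq_bigr => i _ do under eq_bigr => j _ do
  rewrite tensmxE -coef_ord mulrC -mulrA.
under eq_bigr => i _ do rewrite -mulr_sumr (sum_Jblock_col _ (fun j => coef i j u)).
by rewrite (sum_Jblock_col _ (fun i => coef i b u + coef_yu i b u)).
Qed.

Lemma sum_bin0 b (g : nat -> F) : \sum_(0 <= j < b.+1) 'C(0, b - j)%:R * g j = g b.
Proof.
rewrite big_nat_recr //= subnn bin0 mul1r big_nat_cond big1 ?add0r //.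
by move=> j /andP[/andP[_ hj] _]; rewrite bin0n subn_eq0 leqNgt hj mul0r.
Qed.

Lemma sum_binS a b (g : nat -> F) :
  \sum_(0 <= j < b.+2) 'C(a.+1, b.+1 - j)%:R * g j =
  \sum_(0 <= j < b.+2) 'C(a, b.+1 - j)%:R * g j +
  \sum_(0 <= j < b.+1) 'C(a, b - j)%:R * g j.
Proof.
rewrite !(big_nat_recr b.+1) //= subnn !bin0 (eq_big_nat _ _ (F2 := fun j =>
  'C(a, b.+1 - j)%:R * g j + 'C(a, b - j)%:R * g j)) => [|j /andP[_ hj]].
  by rewrite big_split /=; ring.
by rewrite subSn // binS natrD mulrDl.
Qed.

Lemma twist_mulXpY r s (u : V r s) :
  twist (mulXpY u) = twist u *m (Jblock F r *t Jblock F s) - twist u.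
Proof.
apply: coef_ext => a b ha hb.
rewrite linearB /= coef_mul_Jtens // !coef_poly_row // /coef_xu /coef_yu.
rewrite (eq_big_nat _ _ (F2 := fun j => 'C(a, b - j)%:R *
   ((if a is a'.+1 then coef a' j u else 0) + (if j is j'.+1 then coef a j' u else 0))));
  last by move=> j hj; rewrite coef_poly_row //; lia.
case: a ha => [|a] ha; case: b hb => [|b] hb /=.
- by rewrite big_nat1 /= !addr0 mulr0 subrr.
- rewrite sum_bin0 !coef_poly_row; try lia.
  by rewrite !sum_bin0 add0r !addr0 addrAC subrr add0r.
- rewrite !big_nat1 !coef_poly_row; try lia.
  by rewrite !big_nat1 /= !bin0 !mul1r !addr0 addrAC subrr add0r.
- under eq_bigr do rewrite mulrDr.
  rewrite big_split /= sum_binS big_nat_recl //= mulr0 add0r.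
  rewrite !coef_poly_row; try lia.
  under [X in _ + X = _]eq_bigr do rewrite subSS.
  ring.
Qed.

Lemma twist_inj r s (u : V r s) : twist u = 0 -> u = 0.
Proof.
move=> u0; apply: coef_ext => a b ha hb; rewrite linear0.
elim/ltn_ind: b hb => b IHb hb; have := congr1 (coef a b) u0.
rewrite linear0 coef_poly_row // big_nat_recr //= subnn bin0 mul1r.
rewrite big_nat_cond big1 ?add0r // => j /andP[/andP[_ hj] _].
by rewrite IHb ?mulr0 //; apply: ltn_trans hb.
Qed.

End TruncatedPolynomials.

Section JordanChains.
Variable F : fieldType.

Lemma row_mul_Jblock n m (w : nat -> 'rV[F]_m) (j : 'I_n) :
  row j (Jblock F n *m \matrix_(k < n) w k) =
    w j + (if (j.+1 < n)%N then w j.+1 else 0).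
Proof.
rewrite row_mul mulmx_sum_row.
under eq_bigr => k _ do rewrite !mxE rowK.
rewrite -(big_mkord xpredT (fun k => ((k == j) || (k == j.+1))%:R *: w k)) /=.
rewrite (eq_big_nat _ _ (F2 := fun k =>
  (if k == j then w k else 0) + (if k == j.+1 then w k else 0))) => [|k _].
  by rewrite big_split /= !sum_nat_delta ltn_ord.
case: eqP => [->|_]; case: eqP => [|_]; rewrite ?scale1r ?scale0r ?addr0 ?add0r //.
lia.
Qed.

Lemma mulmx_Jblock_chain n m (A : 'M[F]_m) (w : nat -> 'rV[F]_m) :
  w n = 0 -> (forall j, (j < n)%N -> w j *m A = w j + w j.+1) ->
  (\matrix_(j < n) w j) *m A = Jblock F n *m \matrix_(j < n) w j.
Proof.
move=> wn0 chainA; apply/row_matrixP => j.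
rewrite row_mul rowK chainA // row_mul_Jblock.
case: ltnP => // le_n_Sj.
have -> : j.+1 = n by apply/eqP; rewrite eqn_leq le_n_Sj ltn_ord.
by rewrite wn0 addr0.
Qed.

Lemma mxcol_rows_free r m (n : nat -> nat) (w : nat -> nat -> 'rV[F]_m)
    (u : 'rV[F]_(\sum_(i < r) n i)) :
  (forall c : nat -> nat -> F,
     \sum_(0 <= i < r) \sum_(0 <= j < n i) c i j *: w i j = 0 ->
     forall i j, (i < r)%N -> (j < n i)%N -> c i j = 0) ->
  u *m \mxcol_(i < r) (\matrix_(j < n i) w i j) = 0 -> u = 0.
Proof.
move=> free uB0.
pose c i j := \sum_(k < r | val k == i) \sum_(l < n k | val l == j) submxrow u k 0 l.
have c_ord (k : 'I_r) (l : 'I_(n k)) : c k l = submxrow u k 0 l.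
  by rewrite /c (big_pred1 k) => [|k']; rewrite ?(big_pred1 l) // => l'; exact: val_eqE.
have sum_c0 : \sum_(0 <= i < r) \sum_(0 <= j < n i) c i j *: w i j = 0.
  rewrite -[RHS]uB0 -{1}(submxrowK u) mul_mxrow_mxcol big_mkord.
  apply: eq_bigr => k _; rewrite big_mkord mulmx_sum_row.
  by apply: eq_bigr => l _; rewrite rowK c_ord.
apply/mxrowP => k; rewrite submxrow0; apply/rowP => l; rewrite [RHS]mxE -c_ord.
exact: free sum_c0 k l (ltn_ord k) (ltn_ord l).
Qed.

Lemma castmx_unitmx m n (e : m = n) (P : 'M[F]_(m, n)) :
  (forall u : 'rV_m, u *m P = 0 -> u = 0) -> castmx (e, erefl n) P \in unitmx.
Proof.
case: n / e P => P injP; rewrite castmx_id -row_free_unit -kermx_eq0.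
apply/eqP/row_matrixP => i; rewrite row0; apply: injP.
by rewrite -row_mul mulmx_ker row0.
Qed.

Lemma castmx_similar m n (e : m = n) (D : 'M[F]_m) (P : 'M[F]_(m, n)) (A : 'M[F]_n) :
  D *m P = P *m A ->
  castmx (e, erefl n) P *m A = castmx (e, e) D *m castmx (e, erefl n) P.
Proof. by case: n / e A P => A P DPA; rewrite !castmx_id DPA. Qed.

End JordanChains.

Lemma admissible_pchar (F : fieldType) p r s : p \in [pchar F] -> (r <= s)%N ->
  (forall k : int, (`|k|%N + 2 <= r)%N -> ~~ (p%:Z %| s%:Z - k)%Z) ->
  admissible F r s.
Proof.
move=> pF le_rs noncong m hm; rewrite -!(dvdn_pcharf pF); split.
- have := noncong (- m%:Z); rewrite abszN absz_nat addn2 => /(_ hm).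
  by rewrite opprK -PoszD dvdzE !absz_nat.
- have := noncong m%:Z; rewrite absz_nat addn2 => /(_ hm).
  by rewrite subzn ?dvdzE ?absz_nat //; lia.
Qed.

Theorem theorem2 (p r s : nat) (hp : prime p) (hr : (1 <= r)%N) (hrs : (r <= s)%N)
  (hcong : forall k : int, (`|k|%N + 2 <= r)%N -> ~~ (p%:Z %| s%:Z - k)%Z)
  (F : fieldType) (hF : p \in [pchar F]) :
  exists P : 'M[F]_(r * s),
    P \in unitmx /\ P *m (Jblock F r *t Jblock F s) = std_jordan F hrs *m P.
Proof.
have adm := admissible_pchar hF hrs hcong.
pose w i j := twist (iter j (@mulXpY F r s) (chain_head F i r s)).
exists (castmx (std_part_sum hrs, erefl (r * s))
          (\mxcol_(i < r) \matrix_(j < chain_len r s i) w i j)).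
split.
- apply/castmx_unitmx => u; apply: mxcol_rows_free => c sum_c0.
  apply: (chains_free hrs adm); apply: twist_inj.
  rewrite linear_sum -[RHS]sum_c0; apply: eq_bigr => i _.
  by rewrite linear_sum; apply: eq_bigr => j _; rewrite linearZ.
- apply: castmx_similar; rewrite mul_mxdiag_mxcol mxcol_mul; apply: eq_mxcol => i.
  apply/esym/mulmx_Jblock_chain => [|j _]; first by rewrite /w chain_head_nilpotent linear0.
  by rewrite /w iterS twist_mulXpY addrC subrK.
Qed.
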